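(* Let $a>c$, let $\mathbf V'\subset\mathbf V$ be nonempty, and let $g:\mathbf V'\to\mathbb R$ satisfy $g(x)-g(y)\le S_a(y,x)$ for all $x,y\in\mathbf V'$. Then the function $$v(x)=\begin{cases}g(x), & x\in\mathbf V',\\ \min\{g(y)+S_a(y,x):y\in\mathbf V'\}, & x\notin\mathbf V',\end{cases}$$ is the unique function on $\mathbf V$ that solves $(DFE_a)$ at every $x\in\mathbf V\setminus\mathbf V'$ and agrees with $g$ on $\mathbf V'$; moreover $v$ is a subsolution of $(DFE_a)$ on all of $\mathbf V$.
   Context: Network $\Gamma$ (finite arcs $\mathcal E$ closed under inversion, vertices $\mathbf V$, connected), Hamiltonians $H_\gamma$ continuous, coercive, quasiconvex with $\mathrm{Int}\{H_\gamma(s,\cdot)\le b\}=\{H_\gamma(s,\cdot)<b\}$, $H_{\tilde\gamma}(s,p)=H_\gamma(1-s,-p)$; $a_0$ = max of $\max_s\min_pH_\gamma$ over non-closed arcs and of $c_\gamma$ (least level admitting a periodic viscosity subsolution) over closed arcs, with $\min_pH_\gamma(s,p)$ constant in $s$ whenever $\max_s\min_pH_\gamma=a_0$. Graph $\mathbf X=(\mathbf V,\mathbf E)$, bijection $\Psi:\mathbf E\to\mathcal E$, $\mathrm o(e)=\Psi(e)(0)$, $\mathrm t(e)=\Psi(e)(1)$, $-e=\Psi^{-1}(\widetilde{\Psi(e)})$, $\mathbf E_x=\{e:\mathrm o(e)=x\}$, $\sigma_a(e)=\int_0^1\max\{p:H_{\Psi(e)}(t,p)=a\}dt$. Paths $\xi=(e_1,\dots,e_M)$,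 $M\ge1$, $\mathrm t(e_j)=\mathrm o(e_{j+1})$; $\sigma_a(\xi)=\sum\sigma_a(e_i)$; $S_a(x,y)=\inf\{\sigma_a(\xi):\xi$ path from $x$ to $y\}$. $(DFE_a)$ at $x$: $u(x)=\min_{e\in\mathbf E_x}(u(\mathrm t(e))+\sigma_a(-e))$; subsolution: $u(\mathrm t(e))-u(\mathrm o(e))\le\sigma_a(e)$ $\forall e$. $c=\min\{a\ge a_0:(DFE_a)$ has a subsolution$\}$. *)

From Stdlib Require Import Reals List ClassicalEpsilon.
Open Scope R_scope.

Definition in01 (s : R) : Prop := 0 <= s <= 1.

Definition is_max_of (P : R -> Prop) (m : R) : Prop := P m /\ forall x, P x -> x <= m.
Definition is_min_of (P : R -> Prop) (m : R) : Prop := P m /\ forall x, P x -> m <= x.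
Definition is_glb_of (P : R -> Prop) (m : R) : Prop :=
  (forall x, P x -> m <= x) /\ (forall m', (forall x, P x -> m' <= x) -> m' <= m).

(* max / min / inf of a set of reals (a default value 0 when it does not exist) *)
Definition Rmax_of (P : R -> Prop) : R :=
  match excluded_middle_informative (exists m, is_max_of P m) with
  | left h => proj1_sig (constructive_indefinite_description _ h)
  | right _ => 0 end.
Definition Rmin_of (P : R -> Prop) : R :=
  match excluded_middle_informative (exists m, is_min_of P m) with
  | left h => proj1_sig (constructive_indefinite_description _ h)
  | right _ => 0 end.
Definition Rinf_of (P : R -> Prop) : R :=
  match excluded_middle_informative (exists m, is_glb_of P m) with
  | left h => proj1_sig (constructive_indefinite_description _ h)
  | right _ => 0 end.

(* Riemann integral over [0,1] (default 0 if f is not Riemann integrable) *)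
Definition integral01 (f : R -> R) : R :=
  match excluded_middle_informative
          (exists v, exists pr : Riemann_integrable f 0 1, RiemannInt pr = v) with
  | left h => proj1_sig (constructive_indefinite_description _ h)
  | right _ => 0 end.

(* Edges E = arcs (via the bijection Psi), orig e = Psi(e)(0), term e = Psi(e)(1),
   rev e = -e, Ham e = H_{Psi(e)} (only its values for s in [0,1] matter). *)
Record network := {
  V : Type;
  E : Type;
  orig : E -> V;
  term : E -> V;
  rev : E -> E;
  Ham : E -> R -> R -> R }.

Arguments orig {n} e.
Arguments term {n} e.
Arguments rev {n} e.
Arguments Ham {n} e s p.

Definition finite_type (T : Type) : Prop := exists l : list T, forall x, In x l.

Fixpoint is_path {N : network} (l : list (E N)) (x y : V N) : Prop :=
  match l with
  | nil => False
  | e :: l' => orig e = x /\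
      match l' with
      | nil => term e = y
      | _ => is_path l' (term e) y
      end
  end.

Definition graph_assumptions (N : network) : Prop :=
  finite_type (E N) /\ finite_type (V N) /\
  (forall e : E N, orig (rev e) = term e /\ term (rev e) = orig e /\
                   rev (rev e) = e /\ rev e <> e) /\
  (forall x : V N, exists e : E N, orig e = x) /\
  (forall x y : V N, x <> y -> exists l, is_path l x y).

Definition ham_assumptions (N : network) : Prop :=
  forall e : E N,
  (forall s p, in01 s -> forall eps, 0 < eps -> exists del, 0 < del /\
     forall s' p', in01 s' -> Rabs (s' - s) < del -> Rabs (p' - p) < del ->
       Rabs (Ham e s' p' - Ham e s p) < eps) /\
  (forall M, exists K, forall s p, in01 s -> K < Rabs p -> M < Ham e s p) /\
  (forall s p q lam, in01 s -> 0 <= lam <= 1 ->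
     Ham e s (lam * p + (1 - lam) * q) <= Rmax (Ham e s p) (Ham e s q)) /\
  (forall s b p, in01 s ->
     ((exists del, 0 < del /\ forall q, Rabs (q - p) < del -> Ham e s q <= b)
      <-> Ham e s p < b)) /\
  (forall s p, in01 s -> Ham (rev e) s p = Ham e (1 - s) (- p)).

Definition is_minH {N : network} (e : E N) (s m : R) : Prop :=
  is_min_of (fun r => exists p, Ham e s p = r) m.

Definition periodic_visc_sub {N : network} (e : E N) (l : R) : Prop :=
  exists u : R -> R, continuity u /\ (forall s, u (s + 1) = u s) /\
    forall (phi phi' : R -> R) (s : R),
      (forall r, derivable_pt_lim phi r (phi' r)) -> continuity phi' ->
      0 < s < 1 ->
      (exists del, 0 < del /\ forall r, Rabs (r - s) < del -> u r - phi r <= u s - phi s) ->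
      Ham e s (phi' s) <= l.

(* b >= a_0 : b dominates max_s min_p H_e for non-closed arcs and
   b >= c_e = least level with a periodic subsolution for closed arcs *)
Definition above_a0 (N : network) (b : R) : Prop :=
  (forall e : E N, orig e <> term e ->
     forall s m, in01 s -> is_minH e s m -> m <= b) /\
  (forall e : E N, orig e = term e -> exists l, l <= b /\ periodic_visc_sub e l).

Definition is_a0 (N : network) (x : R) : Prop :=
  above_a0 N x /\ forall b, above_a0 N b -> x <= b.

Definition maxmin_eq {N : network} (e : E N) (x : R) : Prop :=
  is_max_of (fun r => exists s, in01 s /\ is_minH e s r) x.

Definition a0_flatness (N : network) : Prop :=
  forall x, is_a0 N x -> forall e : E N, maxmin_eq e x ->
    exists k, forall s, in01 s -> is_minH e s k.

Definition standing_assumptions (N : network) : Prop :=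
  graph_assumptions N /\ ham_assumptions N /\ a0_flatness N.

Definition sigma {N : network} (a : R) (e : E N) : R :=
  integral01 (fun t => Rmax_of (fun p => Ham e t p = a)).

Definition sigma_path {N : network} (a : R) (l : list (E N)) : R :=
  fold_right (fun e acc => sigma a e + acc) 0 l.

Definition S_a {N : network} (a : R) (x y : V N) : R :=
  Rinf_of (fun r => exists l, is_path l x y /\ r = sigma_path a l).

Definition DFE_at {N : network} (a : R) (u : V N -> R) (x : V N) : Prop :=
  u x = Rmin_of (fun r => exists e : E N, orig e = x /\ r = u (term e) + sigma a (rev e)).

Definition DFE_subsol {N : network} (a : R) (u : V N -> R) : Prop :=
  forall e : E N, u (term e) - u (orig e) <= sigma a e.

(* a > c, where c = min{ b >= a_0 : (DFE_b) has a subsolution } *)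
Definition above_crit (N : network) (a : R) : Prop :=
  exists b, above_a0 N b /\ b < a /\ exists w : V N -> R, DFE_subsol b w.

Definition v_ext {N : network} (a : R) (V' : V N -> Prop) (g : V N -> R) (x : V N) : R :=
  match excluded_middle_informative (V' x) with
  | left _ => g x
  | right _ => Rmin_of (fun r => exists y, V' y /\ r = g y + S_a a y x)
  end.

(* Since a > c there is a level b in [a_0, a) with a subsolution w of (DFE_b).
   For every t, the level b is reached by H_e(t,.), so the largest root of
   H_e(t,.) = b lies strictly below the largest root of H_e(t,.) = a; both roots
   depend continuously on t, hence sigma_b(e) < sigma_a(e) and w is a strict
   subsolution of (DFE_a).  Along any path w increases by less than sigma_a, so
   S_a is finite, v is well defined and, by the triangle inequality for S_a, a
   subsolution solving (DFE_a) off V'.  Any solution u off V' lies below v by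
   induction along paths, and above v since u - w strictly decreases along the
   edges realising the minimum in (DFE_a), so that these edges lead into V'. *)
From Stdlib Require Import Reals Lra List Classical ClassicalEpsilon.
(* Imported last so that [sigma] and [rev] refer to Defs, not to Reals and List. *)
From Pilot Require Import Defs.
Import ListNotations.
Open Scope R_scope.

Lemma Rmin_of_eq (P : R -> Prop) (m : R) : is_min_of P m -> Rmin_of P = m.
Proof.
  intros [Pm Hm]; unfold Rmin_of.
  destruct excluded_middle_informative as [h | h].
  - destruct constructive_indefinite_description as [m' [Pm' Hm']]; simpl.
    apply Rle_antisym; auto.
  - exfalso; apply h; exists m; split; auto.
Qed.

Lemma Rmax_of_eq (P : R -> Prop) (m : R) : is_max_of P m -> Rmax_of P = m.
Proof.
  intros [Pm Hm]; unfold Rmax_of.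
  destruct excluded_middle_informative as [h | h].
  - destruct constructive_indefinite_description as [m' [Pm' Hm']]; simpl.
    apply Rle_antisym; auto.
  - exfalso; apply h; exists m; split; auto.
Qed.

Lemma Rinf_of_eq (P : R -> Prop) (m : R) : is_glb_of P m -> Rinf_of P = m.
Proof.
  intros [Pm Hm]; unfold Rinf_of.
  destruct excluded_middle_informative as [h | h].
  - destruct constructive_indefinite_description as [m' [Pm' Hm']]; simpl.
    apply Rle_antisym; auto.
  - exfalso; apply h; exists m; split; auto.
Qed.

Lemma is_glb_of_exists (P : R -> Prop) (B : R) :
  (exists x, P x) -> (forall x, P x -> B <= x) -> exists m, is_glb_of P m.
Proof.
  intros [x0 Hx0] HB.
  destruct (completeness (fun y => P (- y))) as [m [Hub Hlub]].
  - exists (- B); intros y Hy; apply HB in Hy; lra.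
  - exists (- x0); rewrite Ropp_involutive; exact Hx0.
  - exists (- m); split.
    + intros x Hx. assert (- x <= m) by (apply Hub; rewrite Ropp_involutive; exact Hx). lra.
    + intros m' Hm'. assert (m <= - m') by (apply Hlub; intros y Hy; apply Hm' in Hy; lra). lra.
Qed.

Lemma In_argmin {T : Type} (l : list T) (P : T -> Prop) (f : T -> R) :
  (exists x, P x /\ In x l) ->
  exists x, P x /\ In x l /\ forall y, P y -> In y l -> f x <= f y.
Proof.
  induction l as [| a l IH]; intros [x [Px Ix]]; [destruct Ix |].
  destruct (classic (exists y, P y /\ In y l)) as [Hex | Hno].
  - destruct (IH Hex) as [y [Py [Iy My]]].
    destruct (classic (P a /\ f a <= f y)) as [[Pa Ha] | Ha].
    + exists a; split; [exact Pa | split; [left; reflexivity |]].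
      intros z Pz [<- | Iz]; [lra | specialize (My z Pz Iz); lra].
    + exists y; split; [exact Py | split; [right; exact Iy |]].
      intros z Pz [<- | Iz]; [apply Rnot_lt_le; intro; apply Ha; split; [exact Pz | lra] |].
      exact (My z Pz Iz).
  - destruct Ix as [<- | Ix]; [| exfalso; apply Hno; eauto].
    exists a; split; [exact Px | split; [left; reflexivity |]].
    intros z Pz [<- | Iz]; [lra | exfalso; apply Hno; eauto].
Qed.

Lemma finite_argmin {T : Type} (P : T -> Prop) (f : T -> R) :
  finite_type T -> (exists x, P x) -> exists x, P x /\ forall y, P y -> f x <= f y.
Proof.
  intros [l Hl] [x Px].
  destruct (In_argmin l P f) as [y [Py [_ My]]]; [exists x; auto |].
  exists y; split; [exact Py | intros z Pz; apply My; auto].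
Qed.

(** * Real analysis *)

Lemma continuity_pt_eps (f : R -> R) (x : R) :
  (forall eps, 0 < eps -> exists del, 0 < del /\
     forall y, Rabs (y - x) < del -> Rabs (f y - f x) < eps) ->
  continuity_pt f x.
Proof.
  intros Hf eps Heps. destruct (Hf eps Heps) as [del [Hdel Hy]].
  exists del; split; [exact Hdel |]. intros y [_ Hyx]; exact (Hy y Hyx).
Qed.

Lemma continuity_interior_max (f : R -> R) (lo hi m : R) :
  (forall x, lo <= x <= hi -> continuity_pt f x) ->
  lo <= m <= hi -> f lo < f m -> f hi < f m ->
  exists s, lo < s < hi /\ forall r, lo <= r <= hi -> f r <= f s.
Proof.
  intros Hf Hm Hlo Hhi.
  destruct (continuity_ab_maj f lo hi ltac:(lra) Hf) as [s [Hmax Hs]].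
  pose proof (Hmax m Hm).
  exists s; split; [| exact Hmax].
  split; apply Rnot_le_lt; intro Hle.
  - replace s with lo in * by lra. lra.
  - replace s with hi in * by lra. lra.
Qed.

Lemma derivable_pt_lim_parabola (k t0 r : R) :
  derivable_pt_lim (fun x => k * ((x - t0) * (x - t0))) r (k * (2 * (r - t0))).
Proof.
  assert (Hlin : derivable_pt_lim (fun x => x - t0) r 1).
  { replace 1 with (1 - 0) by ring.
    apply (derivable_pt_lim_minus id (fct_cte t0));
      [apply derivable_pt_lim_id | apply derivable_pt_lim_const]. }
  replace (k * (2 * (r - t0))) with (k * (1 * (r - t0) + (r - t0) * 1)) by ring.
  apply (derivable_pt_lim_scal (fun x => (x - t0) * (x - t0))).
  exact (derivable_pt_lim_mult (fun x => x - t0) (fun x => x - t0) r 1 1 Hlin Hlin).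
Qed.

Lemma tube_lemma (P : R -> R -> Prop) (t0 al be : R) :
  (forall q, al <= q <= be -> exists d, 0 < d /\
     forall t q', Rabs (t - t0) < d -> Rabs (q' - q) < d -> P t q') ->
  exists del, 0 < del /\ forall t q, Rabs (t - t0) < del -> al <= q <= be -> P t q.
Proof.
  intros Hloc. destruct (Rlt_le_dec be al) as [Hlt | Hle].
  { exists 1; split; [lra | intros; lra]. }
  set (A := fun r => al <= r <= be /\ exists del, 0 < del /\
     forall t q, Rabs (t - t0) < del -> al <= q <= r -> P t q).
  assert (Aal : A al).
  { split; [lra |]. destruct (Hloc al ltac:(lra)) as [d [Hd Hn]].
    exists d; split; [exact Hd |]. intros t q Ht Hq. apply Hn; [exact Ht |].
    replace (q - al) with 0 by lra. rewrite Rabs_R0; exact Hd. }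
  destruct (completeness A) as [r [Hub Hlub]];
    [exists be; intros x [Hx _]; lra | exists al; exact Aal |].
  assert (Hr : al <= r <= be) by (split; [apply Hub, Aal | apply Hlub; intros x [Hx _]; lra]).
  destruct (Hloc r Hr) as [d [Hd Hn]].
  assert (Hclose : exists r1, A r1 /\ r - d < r1).
  { apply NNPP; intros Hno.
    assert (r <= r - d); [| lra].
    apply Hlub; intros x Ax. apply Rnot_lt_le; intro Hx. apply Hno; exists x; auto. }
  destruct Hclose as [r1 [Ar1 Hr1d]].
  assert (Hr1 : r1 <= r) by (apply Hub; exact Ar1).
  destruct Ar1 as [_ [d1 [Hd1 Hn1]]].
  pose proof (Rmin_l be (r + d / 2)); pose proof (Rmin_r be (r + d / 2)).
  set (r' := Rmin be (r + d / 2)) in *.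
  assert (Ar' : A r').
  { split; [split; [apply Rmin_glb |]; lra |].
    exists (Rmin d1 d); split; [apply Rmin_glb_lt; assumption |].
    intros t q Ht Hq. pose proof (Rmin_l d1 d); pose proof (Rmin_r d1 d).
    destruct (Rle_dec q r1).
    - apply Hn1; lra.
    - apply Hn; [lra | apply Rabs_def1; lra]. }
  assert (Hbe : r' = be).
  { assert (r' <= r) by (apply Hub; exact Ar').
    unfold r' in *; unfold Rmin in *; destruct Rle_dec; lra. }
  destruct Ar' as [_ [del [Hdel Hdl]]].
  exists del; split; [exact Hdel |]. intros t q Ht Hq. apply Hdl; [exact Ht | lra].
Qed.

Definition continuous01 (f : R -> R) : Prop :=
  forall t0, in01 t0 -> forall eps, 0 < eps -> exists del, 0 < del /\
    forall t, in01 t -> Rabs (t - t0) < del -> Rabs (f t - f t0) < eps.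

(* [integral01] only sees the values on [0,1]; composing with this retraction
   yields a function continuous on all of R, as Stdlib's integrability criterion
   requires. *)
Definition clamp01 (t : R) : R := Rmax 0 (Rmin 1 t).

Lemma clamp01_in01 (t : R) : in01 (clamp01 t).
Proof. unfold clamp01, in01, Rmax, Rmin; repeat destruct Rle_dec; lra. Qed.

Lemma clamp01_id (t : R) : in01 t -> clamp01 t = t.
Proof. unfold clamp01, in01, Rmax, Rmin; intros; repeat destruct Rle_dec; lra. Qed.

Lemma clamp01_contract (x y : R) : Rabs (clamp01 y - clamp01 x) <= Rabs (y - x).
Proof.
  unfold clamp01, Rmax, Rmin; repeat destruct Rle_dec;
    unfold Rabs; repeat destruct Rcase_abs; lra.
Qed.

Lemma continuity_pt_clamp01 (f : R -> R) :
  continuous01 f -> forall x, continuity_pt (fun t => f (clamp01 t)) x.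
Proof.
  intros Hf x; apply continuity_pt_eps; intros eps Heps.
  destruct (Hf (clamp01 x) (clamp01_in01 x) eps Heps) as [del [Hdel Hc]].
  exists del; split; [exact Hdel |]. intros y Hy.
  apply Hc; [apply clamp01_in01 |]. pose proof (clamp01_contract x y); lra.
Qed.

Lemma integral01_clamp01 (f : R -> R) (pr : Riemann_integrable (fun t => f (clamp01 t)) 0 1) :
  integral01 f = RiemannInt pr.
Proof.
  assert (Hext : forall t, 0 < t < 1 -> f (clamp01 t) = f t)
    by (intros t Ht; rewrite clamp01_id; [reflexivity | unfold in01; lra]).
  unfold integral01; destruct excluded_middle_informative as [h | h].
  - destruct constructive_indefinite_description as [r [pr' Hr]]; simpl; rewrite <- Hr.
    symmetry; apply RiemannInt_P18; [lra | exact Hext].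
  - exfalso; apply h; exists (RiemannInt pr).
    assert (pr' : Riemann_integrable f 0 1).
    { refine (Riemann_integrable_ext f _ pr).
      intros t Ht; rewrite Rmin_left, Rmax_right in Ht by lra.
      rewrite clamp01_id; [reflexivity | unfold in01; lra]. }
    exists pr'; apply RiemannInt_P18; [lra |]. intros t Ht; symmetry; exact (Hext t Ht).
Qed.

Lemma integral01_lt (f g : R -> R) :
  continuous01 f -> continuous01 g -> (forall t, in01 t -> f t < g t) ->
  integral01 f < integral01 g.
Proof.
  intros Hf Hg Hlt.
  set (F := fun t => f (clamp01 t)); set (G := fun t => g (clamp01 t)).
  pose proof (continuity_pt_clamp01 f Hf) as CF; pose proof (continuity_pt_clamp01 g Hg) as CG.
  pose (prF := @continuity_implies_RiemannInt F 0 1 ltac:(lra) (fun x _ => CF x)).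
  pose (prG := @continuity_implies_RiemannInt G 0 1 ltac:(lra) (fun x _ => CG x)).
  set (D := fun t => G t + -1 * F t).
  assert (CD : forall x, continuity_pt D x)
    by (intro x; exact (continuity_pt_plus G (mult_real_fct (-1) F) x (CG x)
                          (continuity_pt_scal F (-1) x (CF x)))).
  destruct (continuity_ab_min D 0 1 ltac:(lra) (fun x _ => CD x)) as [m [Hmin Hm]].
  assert (Hpos : 0 < D m)
    by (unfold D, F, G; specialize (Hlt (clamp01 m) (clamp01_in01 m)); lra).
  pose (prD := RiemannInt_P10 (-1) prG prF).
  pose proof (RiemannInt_P13 prG prF prD) as Hlin.
  pose (prC := RiemannInt_P14 0 1 (D m)).
  pose proof (RiemannInt_P15 prC) as Hconst.
  assert (RiemannInt prC <= RiemannInt prD)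
    by (apply RiemannInt_P19; [lra | intros x Hx; apply Hmin; lra]).
  rewrite (integral01_clamp01 f prF), (integral01_clamp01 g prG).
  unfold D, F, G in *; lra.
Qed.

(** * Roots of a Hamiltonian *)

Section Hamiltonian.

Variable H : R -> R -> R.

Hypothesis H_cont : forall s p, in01 s -> forall eps, 0 < eps -> exists del, 0 < del /\
  forall s' p', in01 s' -> Rabs (s' - s) < del -> Rabs (p' - p) < del ->
    Rabs (H s' p' - H s p) < eps.
Hypothesis H_coercive : forall M, exists K, forall s p, in01 s -> K < Rabs p -> M < H s p.
Hypothesis H_quasiconvex : forall s p q lam, in01 s -> 0 <= lam <= 1 ->
  H s (lam * p + (1 - lam) * q) <= Rmax (H s p) (H s q).
Hypothesis H_sublevel_interior : forall s b p, in01 s ->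
  ((exists del, 0 < del /\ forall q, Rabs (q - p) < del -> H s q <= b) <-> H s p < b).

Lemma H_continuity (t : R) : in01 t -> continuity (H t).
Proof.
  intros Ht x; apply continuity_pt_eps; intros eps Heps.
  destruct (H_cont t x Ht eps Heps) as [del [Hdel Hc]].
  exists del; split; [exact Hdel |]. intros y Hy.
  apply Hc; [exact Ht | rewrite Rminus_diag, Rabs_R0; exact Hdel | exact Hy].
Qed.

Lemma H_gt_near (c t0 q0 : R) : in01 t0 -> c < H t0 q0 -> exists d, 0 < d /\
  forall t q, in01 t -> Rabs (t - t0) < d -> Rabs (q - q0) < d -> c < H t q.
Proof.
  intros Ht0 Hq0. destruct (H_cont t0 q0 Ht0 (H t0 q0 - c) ltac:(lra)) as [d [Hd Hc]].
  exists d; split; [exact Hd |]. intros t q Ht Htd Hqd.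
  specialize (Hc t q Ht Htd Hqd). apply Rabs_def2 in Hc. lra.
Qed.

Lemma H_gt_near_interval (c t0 al be : R) : in01 t0 ->
  (forall q, al <= q <= be -> c < H t0 q) ->
  exists del, 0 < del /\
    forall t q, in01 t -> Rabs (t - t0) < del -> al <= q <= be -> c < H t q.
Proof.
  intros Ht0 Hq.
  destruct (tube_lemma (fun t q => in01 t -> c < H t q) t0 al be) as [del [Hdel Htube]].
  - intros q Hq'. destruct (H_gt_near c t0 q Ht0 (Hq q Hq')) as [d [Hd Hn]].
    exists d; split; [exact Hd |]. intros t q' Htd Hqd Ht. exact (Hn t q' Ht Htd Hqd).
  - exists del; split; [exact Hdel |]. intros t q Ht Htd Hq'. exact (Htube t q Htd Hq' Ht).
Qed.

Lemma H_root_above (t c q : R) : in01 t -> H t q < c -> exists z, q < z /\ H t z = c.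
Proof.
  intros Ht Hq. destruct (H_coercive c) as [K HK].
  set (z := Rmax (Rabs q) (Rabs K) + 1).
  pose proof (Rmax_l (Rabs q) (Rabs K)); pose proof (Rmax_r (Rabs q) (Rabs K)).
  pose proof (Rle_abs q); pose proof (Rle_abs K); pose proof (Rabs_pos q).
  assert (Hz : c < H t z) by (apply HK; [exact Ht | unfold z; rewrite Rabs_right; lra]).
  destruct (IVT (fun p => H t p - c) q z) as [r [Hr Hroot]].
  - intro x; apply continuity_pt_minus;
      [apply H_continuity; exact Ht | apply continuity_pt_const; intros ? ?; reflexivity].
  - unfold z; lra.
  - simpl; lra.
  - simpl; lra.
  - exists r; split; [| simpl in Hroot; lra].
    destruct (Rle_lt_or_eq_dec q r (proj1 Hr)) as [| <-]; [assumption | simpl in Hroot; lra].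
Qed.

Lemma exists_max_root (t c m : R) : in01 t -> H t m <= c ->
  exists P, H t P = c /\ forall q, H t q <= c -> q <= P.
Proof.
  intros Ht Hm. destruct (H_coercive c) as [K HK].
  assert (Hbound : forall p, H t p = c -> p <= K).
  { intros p Hp. apply Rnot_lt_le; intro HpK.
    pose proof (HK t p Ht ltac:(pose proof (Rle_abs p); lra)); lra. }
  assert (Hne : exists p, H t p = c).
  { destruct (Rle_lt_or_eq_dec _ _ Hm) as [Hlt | Heq]; [| eauto].
    destruct (H_root_above t c m Ht Hlt) as [z [_ Hz]]; eauto. }
  destruct (completeness (fun p => H t p = c)) as [P [Hub Hlub]];
    [exists K; exact Hbound | exact Hne |].
  exists P; split.
  - apply NNPP; intro HPc.
    assert (Hgap : 0 < Rabs (H t P - c)) by (apply Rabs_pos_lt; lra).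
    destruct (H_cont t P Ht _ Hgap) as [del [Hdel Hc]].
    (* no root lies within del of P, so P - del/2 is already an upper bound *)
    assert (P <= P - del / 2); [| lra].
    apply Hlub; intros p Hp. apply Rnot_lt_le; intro Hpd.
    assert (p <= P) by (apply Hub; exact Hp).
    assert (Hclose : Rabs (H t p - H t P) < Rabs (H t P - c))
      by (apply Hc; [exact Ht | rewrite Rminus_diag, Rabs_R0; exact Hdel |
                     rewrite Rabs_left1; lra]).
    rewrite Hp, Rabs_minus_sym in Hclose. lra.
  - intros q Hq. destruct (Rle_lt_or_eq_dec _ _ Hq) as [Hlt | Heq]; [| apply Hub; exact Heq].
    destruct (H_root_above t c q Ht Hlt) as [z [Hqz Hz]].
    pose proof (Hub z Hz); lra.
Qed.

Definition max_root (c t : R) : R := Rmax_of (fun p => H t p = c).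

Definition level_attained (c : R) : Prop := forall t, in01 t -> exists m, H t m <= c.

Lemma max_root_spec (t c m : R) : in01 t -> H t m <= c ->
  H t (max_root c t) = c /\ forall q, H t q <= c -> q <= max_root c t.
Proof.
  intros Ht Hm. destruct (exists_max_root t c m Ht Hm) as [P [HP Hsub]].
  unfold max_root; rewrite (Rmax_of_eq _ P); [split; assumption |].
  split; [exact HP | intros q Hq; apply Hsub; rewrite Hq; apply Rle_refl].
Qed.

Lemma max_root_lt (t b c : R) : in01 t -> (exists m, H t m <= b) -> b < c ->
  max_root b t < max_root c t.
Proof.
  intros Ht [m Hm] Hbc.
  destruct (max_root_spec t b m Ht Hm) as [Hb _].
  destruct (max_root_spec t c m Ht ltac:(lra)) as [Hc Hsub].
  assert (Hle : max_root b t <= max_root c t) by (apply Hsub; lra).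
  destruct (Rle_lt_or_eq_dec _ _ Hle) as [| Heq]; [assumption |].
  rewrite Heq in Hb. lra.
Qed.

Lemma H_lt_between (t c q0 q1 q : R) : in01 t -> H t q0 <= c -> H t q1 <= c ->
  q0 < q < q1 -> H t q < c.
Proof.
  intros Ht H0 H1 Hq. apply (H_sublevel_interior t c q Ht).
  exists (Rmin (q - q0) (q1 - q)); split; [apply Rmin_glb_lt; lra |].
  intros q' Hq'. pose proof (Rmin_l (q - q0) (q1 - q)); pose proof (Rmin_r (q - q0) (q1 - q)).
  apply Rabs_def2 in Hq'.
  set (lam := (q1 - q') / (q1 - q0)).
  assert (Hlam : 0 <= lam <= 1).
  { unfold lam; split.
    - apply Rmult_le_pos; [lra | left; apply Rinv_0_lt_compat; lra].
    - apply Rmult_le_reg_r with (q1 - q0); [lra |].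
      unfold Rdiv; rewrite Rmult_assoc, Rinv_l; lra. }
  replace q' with (lam * q0 + (1 - lam) * q1) by (unfold lam; field; lra).
  eapply Rle_trans; [apply H_quasiconvex; assumption | apply Rmax_lub; assumption].
Qed.

Section Level.

Variable c : R.
Hypothesis c_attained : level_attained c.

Lemma max_root_upper_near (t0 eps : R) : in01 t0 -> 0 < eps -> exists del, 0 < del /\
  forall t, in01 t -> Rabs (t - t0) < del -> max_root c t < max_root c t0 + eps.
Proof.
  intros Ht0 Heps.
  destruct (c_attained t0 Ht0) as [m0 Hm0].
  destruct (max_root_spec t0 c m0 Ht0 Hm0) as [_ Hsub0].
  destruct (H_coercive c) as [K HK].
  destruct (H_gt_near_interval c t0 (max_root c t0 + eps) K Ht0) as [del [Hdel Hnear]].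
  { intros q Hq. apply Rnot_le_lt; intro Hle. pose proof (Hsub0 q Hle). lra. }
  exists del; split; [exact Hdel |]. intros t Ht Htd.
  destruct (c_attained t Ht) as [m Hm]. destruct (max_root_spec t c m Ht Hm) as [Hroot _].
  apply Rnot_le_lt; intro Hge.
  destruct (Rle_dec (max_root c t) K) as [HleK | HgtK].
  - pose proof (Hnear t _ Ht Htd (conj Hge HleK)); lra.
  - pose proof (Rle_abs (max_root c t)).
    pose proof (HK t (max_root c t) Ht ltac:(lra)); lra.
Qed.

Lemma max_root_lower_near (t0 eps : R) : in01 t0 -> 0 < eps -> exists del, 0 < del /\
  forall t, in01 t -> Rabs (t - t0) < del -> max_root c t0 - eps < max_root c t.
Proof.
  intros Ht0 Heps.
  destruct (c_attained t0 Ht0) as [m0 Hm0].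
  destruct (max_root_spec t0 c m0 Ht0 Hm0) as [HP _].
  set (P := max_root c t0) in *.
  destruct (classic (exists q, P - eps < q < P /\ H t0 q < c)) as [[q [Hq Hlt]] | Hno].
  - destruct (H_cont t0 q Ht0 (c - H t0 q) ltac:(lra)) as [del [Hdel Hnear]].
    exists del; split; [exact Hdel |]. intros t Ht Htd.
    destruct (c_attained t Ht) as [m Hm]. destruct (max_root_spec t c m Ht Hm) as [_ Hsub].
    assert (Hqt : H t q <= c).
    { pose proof (Hnear t q Ht Htd ltac:(rewrite Rminus_diag, Rabs_R0; lra)) as Hd.
      apply Rabs_def2 in Hd; lra. }
    pose proof (Hsub q Hqt); lra.
  - (* by quasiconvexity, H t0 q <= c for some q <= P - eps would give such a q *)
    destruct (H_coercive c) as [K HK].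
    destruct (H_gt_near_interval c t0 (- Rabs K - 1) (P - eps) Ht0) as [del [Hdel Hnear]].
    { intros q Hq. apply Rnot_le_lt; intro Hle. apply Hno; exists (P - eps / 2).
      split; [lra |]. apply (H_lt_between t0 c q P); [exact Ht0 | exact Hle | lra | lra]. }
    exists del; split; [exact Hdel |]. intros t Ht Htd.
    destruct (c_attained t Ht) as [m Hm]. destruct (max_root_spec t c m Ht Hm) as [Hroot _].
    apply Rnot_le_lt; intro Hle.
    destruct (Rle_dec (- Rabs K - 1) (max_root c t)) as [Hge | Hlt].
    + pose proof (Hnear t _ Ht Htd (conj Hge Hle)); lra.
    + pose proof (Rabs_pos K); pose proof (Rle_abs K).
      assert (K < Rabs (max_root c t)) by (rewrite Rabs_left; lra).
      pose proof (HK t (max_root c t) Ht ltac:(assumption)); lra.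
Qed.

Lemma max_root_continuous01 : continuous01 (max_root c).
Proof.
  intros t0 Ht0 eps Heps.
  destruct (max_root_upper_near t0 eps Ht0 Heps) as [d1 [Hd1 Hup]].
  destruct (max_root_lower_near t0 eps Ht0 Heps) as [d2 [Hd2 Hlow]].
  exists (Rmin d1 d2); split; [apply Rmin_glb_lt; assumption |].
  intros t Ht Htd. pose proof (Rmin_l d1 d2); pose proof (Rmin_r d1 d2).
  specialize (Hup t Ht ltac:(lra)); specialize (Hlow t Ht ltac:(lra)).
  apply Rabs_def1; lra.
Qed.

End Level.

Lemma H_min_exists (t : R) : in01 t -> exists m, forall p, H t m <= H t p.
Proof.
  intros Ht. destruct (H_coercive (H t 0)) as [K HK].
  pose proof (Rabs_pos K); pose proof (Rle_abs K).
  destruct (continuity_ab_min (H t) (- Rabs K - 1) (Rabs K + 1)) as [m [Hmin Hm]];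
    [lra | intros x _; apply H_continuity; exact Ht |].
  exists m; intro p.
  destruct (Rle_dec (Rabs p) (Rabs K + 1)) as [Hp | Hp].
  - apply Hmin. pose proof (Rle_abs p); pose proof (Rle_abs (- p)); rewrite Rabs_Ropp in *. lra.
  - pose proof (HK t p Ht ltac:(lra)). pose proof (Hmin 0 ltac:(lra)). lra.
Qed.

Definition visc_subsol (u : R -> R) (l : R) : Prop :=
  forall (phi phi' : R -> R) (s : R),
    (forall r, derivable_pt_lim phi r (phi' r)) -> continuity phi' -> 0 < s < 1 ->
    (exists del, 0 < del /\ forall r, Rabs (r - s) < del -> u r - phi r <= u s - phi s) ->
    H s (phi' s) <= l.

Lemma visc_subsol_level_near (u : R -> R) (l t' del : R) :
  continuity u -> visc_subsol u l -> 0 < t' < 1 -> 0 < del ->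
  exists s p, 0 < s < 1 /\ Rabs (s - t') < del /\ H s p <= l.
Proof.
  intros Hu Hv Ht' Hdel.
  set (d := Rmin del (Rmin t' (1 - t')) / 2).
  assert (Hd : 0 < d /\ d < del /\ d < t' /\ d < 1 - t').
  { pose proof (Rmin_l del (Rmin t' (1 - t'))); pose proof (Rmin_r del (Rmin t' (1 - t'))).
    pose proof (Rmin_l t' (1 - t')); pose proof (Rmin_r t' (1 - t')).
    assert (0 < Rmin del (Rmin t' (1 - t'))) by (repeat apply Rmin_glb_lt; lra).
    unfold d; lra. }
  (* a parabola steep enough that u - phi has an interior maximum on [t'-d, t'+d] *)
  set (k := (Rabs (u (t' - d) - u t') + Rabs (u (t' + d) - u t') + 1) / (d * d)).
  assert (Hk : k * (d * d) = Rabs (u (t' - d) - u t') + Rabs (u (t' + d) - u t') + 1)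
    by (unfold k; field; lra).
  set (phi := fun r => k * ((r - t') * (r - t'))).
  destruct (continuity_interior_max (fun r => u r - phi r) (t' - d) (t' + d) t')
    as [s [Hs Hmax]].
  - intros x _. apply continuity_pt_minus; [apply Hu | unfold phi; reg].
  - lra.
  - unfold phi. replace ((t' - d - t') * (t' - d - t')) with (d * d) by ring.
    replace ((t' - t') * (t' - t')) with 0 by ring.
    pose proof (Rle_abs (u (t' - d) - u t')); pose proof (Rabs_pos (u (t' + d) - u t')). lra.
  - unfold phi. replace ((t' + d - t') * (t' + d - t')) with (d * d) by ring.
    replace ((t' - t') * (t' - t')) with 0 by ring.
    pose proof (Rle_abs (u (t' + d) - u t')); pose proof (Rabs_pos (u (t' - d) - u t')). lra.
  - exists s, (k * (2 * (s - t'))).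
    split; [lra | split; [apply Rabs_def1; lra |]].
    apply (Hv phi (fun r => k * (2 * (r - t'))) s).
    + intro r; apply derivable_pt_lim_parabola.
    + reg.
    + lra.
    + exists (Rmin (s - (t' - d)) (t' + d - s)); split; [apply Rmin_glb_lt; lra |].
      intros r Hr. apply Rabs_def2 in Hr. apply Hmax.
      pose proof (Rmin_l (s - (t' - d)) (t' + d - s));
        pose proof (Rmin_r (s - (t' - d)) (t' + d - s)). lra.
Qed.

Lemma visc_subsol_level_attained (u : R -> R) (l : R) :
  continuity u -> visc_subsol u l -> level_attained l.
Proof.
  intros Hu Hv t0 Ht0. apply NNPP; intro Hno.
  assert (Hall : forall q, l < H t0 q)
    by (intro q; apply Rnot_le_lt; intro Hq; apply Hno; exists q; exact Hq).
  destruct (H_coercive l) as [K HK].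
  destruct (H_gt_near_interval l t0 (- Rabs K - 1) (Rabs K + 1) Ht0 (fun q _ => Hall q))
    as [del [Hdel Hnear]].
  set (th := Rmin 1 del / 2).
  assert (Hth : 0 < th /\ th <= 1 / 2 /\ th <= del / 2).
  { pose proof (Rmin_l 1 del); pose proof (Rmin_r 1 del).
    assert (0 < Rmin 1 del) by (apply Rmin_glb_lt; lra). unfold th; lra. }
  set (t' := (1 - th) * t0 + th / 2).
  unfold in01 in Ht0.
  assert (Ht' : 0 < t' < 1) by (unfold t'; nra).
  assert (Htt : Rabs (t' - t0) <= th / 2) by (apply Rabs_le; unfold t'; nra).
  destruct (visc_subsol_level_near u l t' (del / 2) Hu Hv Ht' ltac:(lra))
    as [s [p [Hs [Hst Hp]]]].
  assert (Hsd : Rabs (s - t0) < del).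
  { pose proof (Rabs_triang (s - t') (t' - t0)).
    replace (s - t' + (t' - t0)) with (s - t0) in * by ring. lra. }
  assert (Hs01 : in01 s) by (unfold in01; lra).
  pose proof (Rle_abs p); pose proof (Rle_abs (- p)); rewrite Rabs_Ropp in *.
  destruct (Rle_dec (Rabs p) (Rabs K + 1)) as [Hp' | Hp'].
  - pose proof (Hnear s p Hs01 Hsd ltac:(lra)); lra.
  - pose proof (Rle_abs K); pose proof (HK s p Hs01 ltac:(lra)); lra.
Qed.

End Hamiltonian.

(** * The strict monotonicity of sigma *)

Lemma above_a0_level_attained (N : network) (b : R) (e : E N) :
  ham_assumptions N -> above_a0 N b -> level_attained (Ham e) b.
Proof.
  intros Hham [Hopen Hclosed] t Ht.
  destruct (Hham e) as [Hc [Hco _]].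
  destruct (classic (orig e = term e)) as [Hloop | Hnloop].
  - destruct (Hclosed e Hloop) as [l [Hlb [u [Hu [_ Hv]]]]].
    destruct (visc_subsol_level_attained (Ham e) Hc Hco u l Hu Hv t Ht) as [m Hm].
    exists m; lra.
  - destruct (H_min_exists (Ham e) Hc Hco t Ht) as [m Hm].
    exists m. apply (Hopen e Hnloop t); [exact Ht |].
    split; [exists m; reflexivity | intros r [p <-]; apply Hm].
Qed.

Lemma sigma_lt (N : network) (e : E N) (b a : R) :
  ham_assumptions N -> level_attained (Ham e) b -> b < a -> sigma b e < sigma a e.
Proof.
  intros Hham Hb Hba. destruct (Hham e) as [Hc [Hco [Hqc [Hint _]]]].
  assert (Ha : level_attained (Ham e) a)
    by (intros t Ht; destruct (Hb t Ht) as [m Hm]; exists m; lra).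
  apply (integral01_lt (max_root (Ham e) b) (max_root (Ham e) a)).
  - exact (max_root_continuous01 (Ham e) Hc Hco Hqc Hint b Hb).
  - exact (max_root_continuous01 (Ham e) Hc Hco Hqc Hint a Ha).
  - intros t Ht. exact (max_root_lt (Ham e) Hc Hco t b a Ht (Hb t Ht) Hba).
Qed.

Lemma strict_subsol_of_above_crit (N : network) (a : R) :
  ham_assumptions N -> above_crit N a ->
  exists w : V N -> R, forall e, w (term e) - w (orig e) < sigma a e.
Proof.
  intros Hham [b [Hb [Hba [w Hw]]]]. exists w; intro e.
  pose proof (Hw e).
  pose proof (sigma_lt N e b a Hham (above_a0_level_attained N b e Hham Hb) Hba). lra.
Qed.

(** * The discrete problem *)

Section Paths.

Context {N : network}.

Lemma is_path_cons (e : E N) (l : list (E N)) (x y : V N) :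
  is_path (e :: l) x y <-> orig e = x /\ (l = [] /\ term e = y \/ is_path l (term e) y).
Proof. destruct l; simpl; intuition (try discriminate; auto). Qed.

Lemma is_path_rcons (l : list (E N)) (f : E N) (x y : V N) :
  is_path (l ++ [f]) x y <-> term f = y /\ (l = [] /\ orig f = x \/ is_path l x (orig f)).
Proof.
  revert x. induction l as [| e l IH]; intro x.
  - simpl; intuition.
  - simpl app; rewrite !is_path_cons, IH.
    pose proof (app_cons_not_nil l [] f).
    intuition (try congruence).
Qed.

Lemma is_path_last (l : list (E N)) (x y : V N) : is_path l x y ->
  exists l0 f, l = l0 ++ [f] /\ term f = y /\ (l0 = [] /\ orig f = x \/ is_path l0 x (orig f)).
Proof.
  intro Hl. destruct l as [| e l]; [destruct Hl |].
  destruct (exists_last (l := e :: l) ltac:(discriminate)) as [l0 [f Hf]].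
  exists l0, f; split; [exact Hf |]. apply is_path_rcons; rewrite <- Hf; exact Hl.
Qed.

Lemma sigma_path_rcons (a : R) (l : list (E N)) (f : E N) :
  sigma_path a (l ++ [f]) = sigma_path a l + sigma a f.
Proof. induction l as [| e l IH]; simpl; [| rewrite IH]; ring. Qed.

End Paths.

Section Discrete.

Variable N : network.
Hypothesis finite_V : finite_type (V N).
Hypothesis finite_E : finite_type (E N).
Hypothesis orig_rev : forall e : E N, orig (rev e) = term e.
Hypothesis term_rev : forall e : E N, term (rev e) = orig e.
Hypothesis rev_rev : forall e : E N, rev (rev e) = e.
Hypothesis out_edge : forall x : V N, exists e : E N, orig e = x.
Hypothesis connected : forall x y : V N, x <> y -> exists l, is_path l x y.

Variable a : R.
Variable w : V N -> R.
Hypothesis w_strict : forall e : E N, w (term e) - w (orig e) < sigma a e.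

Lemma path_exists (x y : V N) : exists l, is_path l x y.
Proof.
  destruct (classic (x = y)) as [<- | Hxy]; [| exact (connected x y Hxy)].
  destruct (out_edge x) as [e He]. exists [e; rev e]. simpl.
  rewrite orig_rev, term_rev; auto.
Qed.

Lemma w_path_lt (l : list (E N)) (x y : V N) : is_path l x y -> w y - w x < sigma_path a l.
Proof.
  revert x; induction l as [| e l IH]; intros x Hl; [destruct Hl |].
  apply is_path_cons in Hl. pose proof (w_strict e). simpl.
  destruct Hl as [<- [[-> <-] | Hl]]; simpl; [lra |].
  specialize (IH _ Hl); lra.
Qed.

Lemma S_a_glb (x y : V N) :
  is_glb_of (fun r => exists l, is_path l x y /\ r = sigma_path a l) (S_a a x y).
Proof.
  destruct (is_glb_of_exists (fun r => exists l, is_path l x y /\ r = sigma_path a l) (w y - w x))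
    as [m Hm].
  - destruct (path_exists x y) as [l Hl]; eauto.
  - intros r [l [Hl ->]]. apply Rlt_le, w_path_lt; exact Hl.
  - unfold S_a; rewrite (Rinf_of_eq _ _ Hm); exact Hm.
Qed.

Lemma S_a_le_path (l : list (E N)) (x y : V N) : is_path l x y -> S_a a x y <= sigma_path a l.
Proof. intro Hl; apply (proj1 (S_a_glb x y)); eauto. Qed.

Lemma le_S_a (m : R) (x y : V N) :
  (forall l, is_path l x y -> m <= sigma_path a l) -> m <= S_a a x y.
Proof. intro Hm; apply (proj2 (S_a_glb x y)); intros r [l [Hl ->]]; exact (Hm l Hl). Qed.

Lemma S_a_rcons (x : V N) (e : E N) : S_a a x (term e) <= S_a a x (orig e) + sigma a e.
Proof.
  assert (S_a a x (term e) - sigma a e <= S_a a x (orig e)); [| lra].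
  apply le_S_a; intros l Hl.
  assert (S_a a x (term e) <= sigma_path a (l ++ [e])); [| rewrite sigma_path_rcons in *; lra].
  apply S_a_le_path, is_path_rcons; auto.
Qed.

Lemma S_a_edge (e : E N) : S_a a (orig e) (term e) <= sigma a e.
Proof.
  assert (S_a a (orig e) (term e) <= sigma_path a [e]) by (apply S_a_le_path; simpl; auto).
  simpl in *; lra.
Qed.

Lemma min_out_edge (x : V N) (F : E N -> R) :
  exists e0, orig e0 = x /\ forall e, orig e = x -> F e0 <= F e.
Proof. exact (finite_argmin (fun e => orig e = x) F finite_E (out_edge x)). Qed.

Lemma DFE_at_spec (u : V N -> R) (x : V N) :
  DFE_at a u x <->
  (exists e, orig e = x /\ u x = u (term e) + sigma a (rev e)) /\
  (forall e, orig e = x -> u x <= u (term e) + sigma a (rev e)).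
Proof.
  unfold DFE_at.
  destruct (min_out_edge x (fun e => u (term e) + sigma a (rev e))) as [e0 [He0 Hmin]].
  rewrite (Rmin_of_eq _ (u (term e0) + sigma a (rev e0)));
    [| split; [eauto | intros r [e [He ->]]; auto]].
  split.
  - intros ->; split; eauto.
  - intros [[e [He ->]] Hle]. apply Rle_antisym; auto.
Qed.

(* Following the minimising edges of u, u - w strictly decreases. *)
Lemma subsol_le_DFE (v u : V N -> R) (B : V N -> Prop) :
  DFE_subsol a v -> (forall x, B x -> v x <= u x) -> (forall x, ~ B x -> DFE_at a u x) ->
  forall x, v x <= u x.
Proof.
  intros Hv HB Hu x. apply Rnot_lt_le; intro Hx.
  destruct (finite_argmin (fun z => u z < v z) (fun z => u z - w z) finite_V)
    as [z [Hz Hmin]]; [eauto |].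
  assert (HzB : ~ B z) by (intro Bz; specialize (HB z Bz); lra).
  destruct (proj1 (DFE_at_spec u z) (Hu z HzB)) as [[e [He Hue]] _].
  pose proof (Hv (rev e)) as Hve; pose proof (w_strict (rev e)) as Hwe.
  rewrite term_rev, orig_rev, He in Hve, Hwe.
  destruct (Rlt_le_dec (u (term e)) (v (term e))) as [Hbad | Hok].
  - specialize (Hmin _ Hbad); lra.
  - lra.
Qed.

Section Extension.

Variable V' : V N -> Prop.
Variable g : V N -> R.
Hypothesis g_compatible : forall x y, V' x -> V' y -> g x - g y <= S_a a y x.
Hypothesis V'_nonempty : exists x, V' x.

Local Notation v := (v_ext a V' g).

Lemma v_ext_in (x : V N) : V' x -> v x = g x.
Proof. intro Hx; unfold v_ext; destruct excluded_middle_informative; [reflexivity | contradiction]. Qed.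

Lemma v_ext_out (x : V N) : ~ V' x ->
  exists y, V' y /\ v x = g y + S_a a y x /\ forall z, V' z -> v x <= g z + S_a a z x.
Proof.
  intro Hx.
  destruct (finite_argmin V' (fun y => g y + S_a a y x) finite_V V'_nonempty) as [y [Hy Hmin]].
  assert (Hv : v x = g y + S_a a y x).
  { unfold v_ext; destruct excluded_middle_informative; [contradiction |].
    apply Rmin_of_eq; split; [eauto | intros r [z [Hz ->]]; auto]. }
  exists y; split; [exact Hy | split; [exact Hv |]]. intros z Hz; rewrite Hv; auto.
Qed.

Lemma v_ext_le (x y : V N) : V' y -> v x <= g y + S_a a y x.
Proof.
  intro Hy. destruct (classic (V' x)) as [Hx | Hx].
  - rewrite v_ext_in by exact Hx. pose proof (g_compatible x y Hx Hy); lra.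
  - destruct (v_ext_out x Hx) as [_ [_ [_ Hle]]]; auto.
Qed.

Lemma v_ext_subsol : DFE_subsol a v.
Proof.
  intro e. destruct (classic (V' (orig e))) as [Ho | Ho].
  - pose proof (v_ext_le (term e) (orig e) Ho); rewrite (v_ext_in (orig e) Ho).
    pose proof (S_a_edge e); lra.
  - destruct (v_ext_out (orig e) Ho) as [y [Hy [Hvy _]]].
    pose proof (v_ext_le (term e) y Hy); pose proof (S_a_rcons y e); lra.
Qed.

Lemma v_ext_DFE (x : V N) : ~ V' x -> DFE_at a v x.
Proof.
  intro Hx. apply DFE_at_spec.
  assert (Hlow : forall e, orig e = x -> v x <= v (term e) + sigma a (rev e)).
  { intros e He. pose proof (v_ext_subsol (rev e)). rewrite term_rev, orig_rev, He in *. lra. }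
  split; [| exact Hlow].
  destruct (min_out_edge x (fun e => v (term e) + sigma a (rev e))) as [e0 [He0 Hmin]].
  exists e0; split; [exact He0 |]. apply Rle_antisym; [apply Hlow, He0 |].
  destruct (v_ext_out x Hx) as [y [Hy [-> _]]].
  assert (v (term e0) + sigma a (rev e0) - g y <= S_a a y x); [| lra].
  apply le_S_a; intros l Hl.
  destruct (is_path_last l y x Hl) as [l0 [f [-> [Hf Hl0]]]].
  rewrite sigma_path_rcons.
  assert (Hm : v (term e0) + sigma a (rev e0) <= v (orig f) + sigma a f).
  { specialize (Hmin (rev f)). rewrite term_rev, rev_rev, orig_rev in Hmin. auto. }
  destruct Hl0 as [[-> Ho] | Hl0].
  - rewrite Ho, (v_ext_in y Hy) in Hm. simpl; lra.
  - pose proof (v_ext_le (orig f) y Hy); pose proof (S_a_le_path l0 y (orig f) Hl0); lra.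
Qed.

Lemma DFE_le_v_ext (u : V N -> R) :
  (forall x, V' x -> u x = g x) -> (forall x, ~ V' x -> DFE_at a u x) ->
  forall x, u x <= v x.
Proof.
  intros HuV HuD x.
  assert (Hpath : forall y l z, V' y -> is_path l y z -> u z <= g y + sigma_path a l).
  { intros y l; induction l as [| f l0 IH] using rev_ind; intros z Hy Hl; [destruct Hl |].
    rewrite sigma_path_rcons. apply is_path_rcons in Hl as [<- Hl].
    destruct (classic (V' (term f))) as [Ht | Ht].
    - rewrite HuV by exact Ht. pose proof (g_compatible (term f) y Ht Hy).
      assert (Hp : is_path (l0 ++ [f]) y (term f)) by (apply is_path_rcons; auto).
      pose proof (S_a_le_path _ _ _ Hp); rewrite sigma_path_rcons in *; lra.
    - destruct (proj1 (DFE_at_spec u (term f)) (HuD _ Ht)) as [_ Hle].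
      specialize (Hle (rev f)); rewrite orig_rev, term_rev, rev_rev in Hle.
      specialize (Hle eq_refl).
      destruct Hl as [[-> <-] | Hl]; [rewrite (HuV _ Hy) in Hle; simpl; lra |].
      specialize (IH _ Hy Hl); lra. }
  destruct (classic (V' x)) as [Hx | Hx]; [rewrite HuV, v_ext_in by exact Hx; lra |].
  destruct (v_ext_out x Hx) as [y [Hy [-> _]]].
  assert (u x - g y <= S_a a y x); [| lra].
  apply le_S_a; intros l Hl. specialize (Hpath y l x Hy Hl); lra.
Qed.

End Extension.

End Discrete.

Theorem theorem6p24 (N : network) (HN : standing_assumptions N) (a : R)
  (Ha : above_crit N a) (V' : V N -> Prop) (HV' : exists x, V' x) (g : V N -> R)
  (Hg : forall x y, V' x -> V' y -> g x - g y <= S_a a y x) :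
  (forall x, V' x -> v_ext a V' g x = g x) /\
  (forall x, ~ V' x -> DFE_at a (v_ext a V' g) x) /\
  (forall u : V N -> R, (forall x, V' x -> u x = g x) ->
     (forall x, ~ V' x -> DFE_at a u x) -> forall x, u x = v_ext a V' g x) /\
  DFE_subsol a (v_ext a V' g).
Proof.
  destruct HN as [[HfinE [HfinV [Hrev [Hout Hconn]]]] [Hham _]].
  destruct (strict_subsol_of_above_crit N a Hham Ha) as [w Hw].
  assert (orig_rev : forall e : E N, orig (rev e) = term e) by apply Hrev.
  assert (term_rev : forall e : E N, term (rev e) = orig e) by apply Hrev.
  assert (rev_rev : forall e : E N, rev (rev e) = e) by apply Hrev.
  assert (Hsub : DFE_subsol a (v_ext a V' g)) by (eapply v_ext_subsol; eauto).
  split; [| split; [| split]].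
  - intros x Hx; exact (v_ext_in N a V' g x Hx).
  - intros x Hx; eapply v_ext_DFE; eauto.
  - intros u HuV HuD x. apply Rle_antisym.
    + eapply DFE_le_v_ext; eauto.
    + eapply subsol_le_DFE with (B := V') (w := w); eauto.
      intros y Hy; rewrite HuV, v_ext_in by exact Hy; lra.
  - exact Hsub.
Qed.
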